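(* Let $F:\mathcal{H}\to\mathbb{R}$ be differentiable with $L$-Lipschitz gradient, $\arg\min F\ne\emptyset$, satisfying (PL) with $\mu>0$, and let $x(\cdot)$ be the solution of the heavy ball system with damping $\alpha>0$ and initial point $x_0$. Let $a,\delta\ge0$ and set $R:=\alpha-a+\delta$. Assume $$R>0,\qquad aR\le 2\mu,\qquad L-\alpha\delta+\frac{\delta}{2}R\le 0.$$ Then the function $V$ defined below satisfies $V(t)\le a(F(x_0)-F_* )e^{-Rt}$ for all $t\ge0$.
   Context: (PL) with constant $\mu>0$: $F(x)-F_*\le \frac{1}{2\mu}\|\nabla F(x)\|^2$ for all $x$, where $F_*=\min F$. Heavy ball system: $\ddot x(t)+\alpha\dot x(t)+\nabla F(x(t))=0$, $x(0)=x_0$, $\dot x(0)=0$ (unique $C^2$ global solution). For parameters $a,\delta$: $W(t)=F(x(t))-F_*$ and $V(t)=aW(t)+\langle\nabla F(x(t)),\dot x(t)\rangle+\frac\delta2\|\dot x(t)\|^2$. *)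

From HB Require Import structures.
From mathcomp Require Import all_boot all_order all_algebra.
From mathcomp Require Import all_classical all_reals all_analysis.
Set Implicit Arguments. Unset Strict Implicit. Unset Printing Implicit Defensive.
Import Order.TTheory GRing.Theory Num.Theory.
Import numFieldNormedType.Exports.
Local Open Scope ring_scope.
Local Open Scope classical_set_scope.

(* A real Hilbert space is modelled as a complete normed module V over a
   realType R together with an inner product ip inducing the norm. *)
Definition is_inner_product (R : realType) (V : normedModType R)
  (ip : V -> V -> R) : Prop :=
  (forall x y : V, ip x y = ip y x) /\
  (forall (c : R) (x y z : V), ip (c *: x + y) z = c * ip x z + ip y z) /\
  (forall x : V, ip x x = `|x| ^+ 2).

Definition is_gradient (R : realType) (V : normedModType R)
  (ip : V -> V -> R) (F : V -> R) (gF : V -> V) : Prop :=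
  forall y : V, differentiable F y /\ forall h : V, 'd F y h = ip (gF y) h.

Definition Lyap (R : realType) (V : normedModType R)
  (ip : V -> V -> R) (F : V -> R) (gF : V -> V) (Fstar a delta : R)
  (x dx : R -> V) (t : R) : R :=
  a * (F (x t) - Fstar) + ip (gF (x t)) (dx t) + delta / 2 * `|dx t| ^+ 2.

(* Write rate := alpha - a + delta and phi(t) := exp(rate t) V(t); the claim is
   phi(t) <= phi(0) = a (F x0 - Fstar).  Since gF is only Lipschitz, V need not be
   differentiable, so instead of phi' we bound the upper right Dini derivative
   of phi: for h > 0, phi(t+h) - phi(t) <= h q_t(h), where q_t(h) is built from
   difference quotients of x, x', F o x and exp(rate .), plus the term
   L |x(t+h) - x(t)|/h |x'(t+h)| which controls the increment of gF(x) by the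
   Lipschitz bound and Cauchy-Schwarz.  As h -> 0, q_t(h) tends to an
   expression that the PL inequality and the conditions on (a, delta) make
   nonpositive.  A function continuous on [0, +oo) with nonpositive upper
   right Dini derivatives on (0, +oo) is nonincreasing (real induction). *)

From HB Require Import structures.
From mathcomp Require Import all_boot all_order all_algebra.
From mathcomp Require Import all_classical all_reals all_analysis.
From mathcomp Require Import ring lra.
Import Order.TTheory GRing.Theory Num.Theory.
Import numFieldNormedType.Exports.
Local Open Scope ring_scope.
Local Open Scope classical_set_scope.

Section InnerProduct.
Context {R : realType} {H : normedModType R} {ip : H -> H -> R}.
Hypothesis ip_inner : is_inner_product ip.

Lemma ipC x y : ip x y = ip y x.
Proof. by case: ip_inner. Qed.

Lemma ip_linear c x y z : ip (c *: x + y) z = c * ip x z + ip y z.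
Proof. by case: ip_inner => _ []. Qed.

Lemma ip_norm x : ip x x = `|x| ^+ 2.
Proof. by case: ip_inner => _ []. Qed.

Lemma ip0l z : ip 0 z = 0.
Proof. by have := ip_linear 1 0 0 z; rewrite scaler0 addr0 mul1r; lra. Qed.

Lemma ipDl x y z : ip (x + y) z = ip x z + ip y z.
Proof. by rewrite -[x]scale1r ip_linear mul1r scale1r. Qed.

Lemma ipZl c x z : ip (c *: x) z = c * ip x z.
Proof. by rewrite -[c *: x]addr0 ip_linear ip0l addr0. Qed.

Lemma ipBl x y z : ip (x - y) z = ip x z - ip y z.
Proof. by rewrite -scaleN1r ipDl ipZl mulN1r. Qed.

Lemma ip0r z : ip z 0 = 0.
Proof. by rewrite ipC ip0l. Qed.

Lemma ipDr x y z : ip z (x + y) = ip z x + ip z y.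
Proof. by rewrite ipC ipDl !(ipC z). Qed.

Lemma ipZr c x z : ip z (c *: x) = c * ip z x.
Proof. by rewrite ipC ipZl ipC. Qed.

Lemma ipBr x y z : ip z (x - y) = ip z x - ip z y.
Proof. by rewrite ipC ipBl !(ipC z). Qed.

Lemma ipNr x z : ip z (- x) = - ip z x.
Proof. by rewrite -sub0r ipBr ip0r sub0r. Qed.

(* Polarisation: ip is determined by the norm; used for its continuity. *)
Lemma ip_polar u v : ip u v = (`|u + v| ^+ 2 - `|u| ^+ 2 - `|v| ^+ 2) / 2.
Proof. by rewrite -!ip_norm ipDl !ipDr (ipC v u); field. Qed.

(* s |-> |s u + v|^2 is a nonnegative quadratic; its discriminant yields
   Cauchy-Schwarz. *)
Lemma ip_quadratic_ge0 (s : R) u v :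
  0 <= s ^+ 2 * `|u| ^+ 2 + 2 * s * ip u v + `|v| ^+ 2.
Proof.
have -> : s ^+ 2 * `|u| ^+ 2 + 2 * s * ip u v + `|v| ^+ 2 = `|s *: u + v| ^+ 2.
  by rewrite -!ip_norm ipDl !ipDr !ipZl !ipZr (ipC v u); ring.
exact: sqr_ge0.
Qed.

Lemma ip_le_norm u v : ip u v <= `|u| * `|v|.
Proof.
have [->|u0] := eqVneq u 0; first by rewrite ip0l normr0 mul0r.
have nu : 0 < `|u| by rewrite normr_gt0.
set q := ip u v; set A := `|u|; set B := `|v|.
have sq : q ^+ 2 <= (A * B) ^+ 2.
  have A2 : 0 < A ^+ 2 by rewrite exprn_gt0.
  have := ip_quadratic_ge0 (- q / A ^+ 2) u v; rewrite -/q -/A -/B => h.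
  have : 0 <= A ^+ 2 * (A ^+ 2 * B ^+ 2 - q ^+ 2).
    suff -> : A ^+ 2 * (A ^+ 2 * B ^+ 2 - q ^+ 2) = (A ^+ 2) ^+ 2 *
      ((- q / A ^+ 2) ^+ 2 * A ^+ 2 + 2 * (- q / A ^+ 2) * q + B ^+ 2).
      by apply: mulr_ge0 => //; exact: sqr_ge0.
    by field; rewrite gt_eqF.
  by rewrite pmulr_rge0 // subr_ge0 exprMn.
have AB : 0 <= A * B by apply: mulr_ge0; apply: normr_ge0.
nra.
Qed.

Lemma cvg_ip {T : Type} {G : set_system T} {FG : Filter G} {f g : T -> H} {u v : H} :
  f @ G --> u -> g @ G --> v -> (fun y => ip (f y) (g y)) @ G --> ip u v.
Proof.
move=> fu gv; under eq_fun do rewrite ip_polar !expr2.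
rewrite ip_polar !expr2.
apply: cvgMr_tmp; apply: cvgB; [apply: cvgB|];
  by apply: cvgM; apply: cvg_norm => //; exact: cvgD.
Qed.

End InnerProduct.

Section RealInduction.
Variable R : realType.

(* Real induction: a property true at t0, preserved under passing to the
   right end of [t0, c), and propagating a little to the right of any c < T up
   to which it holds, holds on all of [t0, T].  The proof considers the
   supremum of the points up to which it holds. *)
Lemma real_induction (P : R -> Prop) (t0 T : R) :
  P t0 ->
  (forall c, t0 < c <= T -> (forall r, t0 <= r < c -> P r) -> P c) ->
  (forall c, t0 <= c < T -> (forall r, t0 <= r <= c -> P r) ->
     exists2 d, 0 < d & forall r, c < r < c + d -> P r) ->
  forall r, t0 <= r <= T -> P r.
Proof.
move=> Pt0 Pleft Pright r /andP[t0r rT].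
pose S := [set s | t0 <= s <= T /\ forall r, t0 <= r <= s -> P r].
have t0T : t0 <= T := le_trans t0r rT.
have St0 : S t0.
  split=> [|r' /andP[r1 r2]]; first by rewrite lexx t0T.
  by have -> : r' = t0 by apply/eqP; rewrite eq_le r1 r2.
have supS : has_sup S by split; [exists t0 | exists T => s [/andP[]]].
set c := sup S.
have t0c : t0 <= c by exact: sup_upper_bound.
have cT : c <= T by apply: ge_sup => [|s [/andP[]]//]; exists t0.
have below_c : forall r, t0 <= r < c -> P r.
  move=> r' /andP[r1 r2].
  have [s [_ Ps] rs] := sup_adherent (ltac:(rewrite subr_gt0 //) : 0 < c - r') supS.
  by apply: Ps; rewrite r1 /=; move: rs; rewrite -/c; lra.
have upto_c : forall r, t0 <= r <= c -> P r.
  move=> r' /andP[r1 r2]; have [r'c|] := ltP r' c; first by apply: below_c; rewrite r1.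
  move=> cr'; have -> : r' = c by apply/eqP; rewrite eq_le r2.
  have [<-//|ct0] := eqVneq t0 c.
  by apply: Pleft => //; rewrite cT andbT lt_neqAle ct0.
suff cT' : c = T by apply: upto_c; rewrite t0r cT'.
apply/eqP; rewrite eq_le cT /=; rewrite leNgt; apply/negP => cT'.
have [d d0 Pd] := Pright c ltac:(by rewrite t0c) upto_c.
pose s := c + Num.min d (T - c) / 2.
have ms : 0 < Num.min d (T - c) by rewrite lt_min d0 subr_gt0.
have md : Num.min d (T - c) <= d by rewrite ge_min lexx.
have mT : Num.min d (T - c) <= T - c by rewrite ge_min lexx orbT.
have : S s.
  split; first by apply/andP; split; rewrite /s; lra.
  move=> r' /andP[r1 r2]; have [r'c|cr'] := leP r' c; first by apply: upto_c; rewrite r1.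
  by apply: Pd; apply/andP; split; rewrite /s in r2; lra.
by move/sup_upper_bound => /(_ supS); rewrite -/c /s; lra.
Qed.

End RealInduction.

Section DiniMonotonicity.
Context {R : realType} {phi : R -> R}.
Hypothesis phi_cont : forall s : R, 0 < s -> phi @ s --> phi s.
Hypothesis phi_cont0 : phi @ 0^'+ --> phi 0.
Hypothesis phi_dini : forall t : R, 0 < t -> forall e : R, 0 < e ->
  \forall h \near 0^'+, phi (t + h) - phi t <= e * h.

Lemma dini_slope_bound e t0 T : 0 < e -> 0 < t0 <= T ->
  phi T <= phi t0 + e * (T - t0).
Proof.
move=> e0 /andP[t00 t0T].
apply: (@real_induction R (fun r => phi r <= phi t0 + e * (r - t0)) t0 T);
  last by rewrite lexx t0T.
- by rewrite subrr mulr0 addr0.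
- move=> c /andP[t0c _] Pc.
  apply: (@ler_cvg_to R (c^'-) _ R phi (fun r => phi t0 + e * (r - t0))).
  + by apply: cvg_at_left_filter; apply: phi_cont; lra.
  + apply: cvgD; first exact: cvg_cst.
    by apply: cvgMl_tmp; apply: cvgB; [exact: cvg_at_left_filter | exact: cvg_cst].
  + exists (c - t0) => /=; first lra.
    move=> r /= + rc; rewrite ltr_norml => /andP[r1 r2].
    by apply: Pc; apply/andP; split; lra.
- move=> c /andP[t0c _] Pc.
  have [eta eta0 Heta] := @phi_dini c (lt_le_trans t00 t0c) e e0.
  exists eta => // r /andP[cr rc].
  have := Heta (r - c); rewrite /= sub0r normrN gtr0_norm; last lra.
  rewrite (addrC c) subrK.
  move=> /(_ ltac:(lra)) /(_ ltac:(lra)).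
  have := Pc c; rewrite t0c lexx => /(_ isT).
  lra.
Qed.

(* Letting the slack go to 0 and t0 go to 0+: phi T <= phi 0. *)
Lemma dini_nonincreasing T : 0 <= T -> phi T <= phi 0.
Proof.
move=> T0; have [->//|TN0] := eqVneq T 0.
have Tp : 0 < T by rewrite lt_neqAle eq_sym TN0 T0.
have le_from_pos : forall t0, 0 < t0 <= T -> phi T <= phi t0.
  move=> t0 ht0; apply/ler_addgt0Pr => eps eps0; move: (ht0) => /andP[t00 t0T].
  have e0 : 0 < eps / (T - t0 + 1) by apply: divr_gt0; lra.
  have := dini_slope_bound _ _ _ e0 ht0.
  have : eps / (T - t0 + 1) * (T - t0) <= eps.
    by rewrite mulrAC ler_pdivrMr; nra.
  lra.
apply: (@ler_cvg_to R (0^'+) _ R (fun=> phi T) phi); [exact: cvg_cst | exact: phi_cont0 |].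
exists T => // r /= + r0; rewrite sub0r normrN gtr0_norm // => rT.
by apply: le_from_pos; rewrite r0 ltW.
Qed.

End DiniMonotonicity.

Lemma dini_from_quotient {R : realType} {phi q : R -> R} {t l : R} :
  q @ 0^' --> l -> l <= 0 ->
  (forall h, 0 < h -> phi (t + h) - phi t <= h * q h) ->
  forall e, 0 < e -> \forall h \near 0^'+, phi (t + h) - phi t <= e * h.
Proof.
move=> ql l0 bound e e0.
have near_q : \forall h \near 0^', q h < e.
  move/cvgrPdist_lt: ql => /(_ (e - l) ltac:(lra)).
  by apply: filterS => h; rewrite ltr_norml; lra.
have near_q' : nbhs (0 : R) (fun h => h != 0 -> q h < e) := near_q.
apply: filterS near_q' => h qe h0.
apply: (le_trans (bound h h0)); rewrite mulrC ler_wpM2r ?ltW //.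
by apply: qe; rewrite gt_eqF.
Qed.

Lemma lipschitz_continuous {R : realType} {U V : normedModType R} {f : U -> V} {L : R} :
  (forall y z, `|f y - f z| <= L * `|y - z|) -> continuous f.
Proof.
move=> fL y; apply/cvgrPdist_lt => e e0.
have L1 : 0 < `|L| + 1 by rewrite ltr_pwDr.
have /cvgrPdist_lt /(_ (e / (`|L| + 1))) near_y := @cvg_id _ (nbhs y).
apply: filterS (near_y (divr_gt0 e0 L1)) => z yz.
apply: (le_lt_trans (fL _ _)); apply: (le_lt_trans (ler_norm _)).
rewrite normrM normr_id.
rewrite -(ltr_pM2l L1) mulrCA mulfV ?gt_eqF // mulr1 in yz.
by apply: le_lt_trans yz; rewrite ler_wpM2r // lerDl.
Qed.

Lemma derive_quotient_cvg {R : realType} {V : normedModType R} {f : R -> V} {t : R} {v : V} :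
  is_derive t 1 f v -> (fun h => h^-1 *: (f (h + t) - f t)) @ 0^' --> v.
Proof.
case=> df <-; have -> : (fun h => h^-1 *: (f (h + t) - f t)) =
    (fun h => h^-1 *: ((f \o shift t) (h *: 1) - f t)).
  by apply/funext => h /=; rewrite [_%:A]mulr1.
exact: df.
Qed.

Lemma is_derive_expR_lin (R : realType) (k t : R) :
  is_derive t 1 (fun s : R => expR (k * s)) (expR (k * t) * k).
Proof.
have lin : is_derive t 1 (fun s : R => k * s) k.
  have := is_deriveZ k (is_derive_id t (1 : R)).
  by rewrite [k *: 1]mulr1 (_ : k \*: id = (fun s : R => k * s)) //; apply/funext.
exact: (is_derive1_comp (is_derive_expR (k * t)) lin).
Qed.

Lemma is_derive_gradient_comp {R : realType} {H : normedModType R} {ip : H -> H -> R}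
    {F : H -> R} {gF : H -> H} {x : R -> H} {t : R} {v : H} :
  is_gradient ip F gF -> is_derive t 1 x v ->
  is_derive t 1 (fun s => F (x s)) (ip (gF (x t)) v).
Proof.
move=> F_grad [dx <-].
have diff_x : differentiable x t by apply/derivable1_diffP.
have [diff_F dF] := F_grad (x t).
have diff_Fx : differentiable (F \o x) t := differentiable_comp diff_x diff_F.
split; first by apply/derivable1_diffP.
by rewrite (deriveE _ diff_Fx) diff_comp //= -(deriveE _ diff_x) dF.
Qed.

Lemma shift_cvg {R : realType} (t : R) : (fun h : R => h + t) @ 0^' --> t.
Proof.
apply: cvg_within_filter.
by rewrite -{2}(add0r t); apply: cvgD; [exact: cvg_id | exact: cvg_cst].
Qed.

Section HeavyBallLyapunov.
Context {R : realType} {H : normedModType R} {ip : H -> H -> R}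
  {F : H -> R} {gF : H -> H} {L mu alpha a delta Fstar : R} {x dx : R -> H}.
Hypothesis ip_inner : is_inner_product ip.
Hypothesis F_grad : is_gradient ip F gF.
Hypothesis gF_lipschitz : forall y z : H, `|gF y - gF z| <= L * `|y - z|.
Hypothesis PL : forall y : H, F y - Fstar <= 1 / (2 * mu) * `|gF y| ^+ 2.
Hypothesis mu_gt0 : 0 < mu.
Hypothesis a_ge0 : 0 <= a.
Hypothesis rate_gt0 : 0 < alpha - a + delta.
Hypothesis rate_PL : a * (alpha - a + delta) <= 2 * mu.
Hypothesis rate_L : L - alpha * delta + delta / 2 * (alpha - a + delta) <= 0.

Let rate := alpha - a + delta.
Let V := Lyap ip F gF Fstar a delta x dx.

(* Pointwise dissipation inequality: at a point y with velocity u and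
   acceleration u' = - alpha u - gF y, the formal derivative of V plus
   rate V plus the Lipschitz defect L |u|^2 is nonpositive.  The <gF y, u>
   terms cancel by the choice of rate; the PL inequality with
   a rate <= 2 mu absorbs a rate (F y - Fstar) into |gF y|^2, and the last
   hypothesis on the parameters kills the |u|^2 terms. *)
Lemma lyap_dissipation (y u g u' : H) : g = gF y -> u' = - (alpha *: u) - g ->
  a * ip g u + ip g u' + delta / 2 * (ip u' u + ip u u') + L * `|u| * `|u|
  + rate * (a * (F y - Fstar) + ip g u + delta / 2 * `|u| ^+ 2) <= 0.
Proof.
move=> gE u'E.
have gu' : ip g u' = - alpha * ip g u - `|g| ^+ 2.
  by rewrite u'E (ipBr ip_inner) (ipNr ip_inner) (ipZr ip_inner) (ip_norm ip_inner); ring.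
have u'u : ip u' u = - alpha * `|u| ^+ 2 - ip g u.
  by rewrite u'E (ipBl ip_inner) -scaleNr (ipZl ip_inner) (ip_norm ip_inner); ring.
rewrite gu' (ipC ip_inner u u') u'u gE.
have W_le : a * rate * (F y - Fstar) <= `|g| ^+ 2.
  have ar : 0 <= a * rate by apply: mulr_ge0 => //; apply: ltW.
  apply: (le_trans (ler_wpM2l ar (PL y))); rewrite -gE.
  rewrite mulrA -[leRHS]mul1r ler_wpM2r ?sqr_ge0 //.
  by rewrite mul1r ler_pdivrMr ?mulr_gt0 // mul1r.
have Lu : (L - alpha * delta + delta / 2 * rate) * `|u| ^+ 2 <= 0.
  by apply: mulr_le0_ge0 => //; exact: sqr_ge0.
rewrite /rate -gE in W_le Lu *; nra.
Qed.

Hypothesis x_deriv : forall t : R, 0 < t -> is_derive t 1 x (dx t).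
Hypothesis dx_deriv : forall t : R, 0 < t ->
  is_derive t 1 dx (- (alpha *: dx t) - gF (x t)).

Let phi (s : R) := expR (rate * s) * V s.

Lemma phi_cvg (G : set_system R) (FG : Filter G) (s0 : R) :
  x @ G --> x s0 -> dx @ G --> dx s0 -> (fun s => s) @ G --> s0 ->
  phi @ G --> phi s0.
Proof.
move=> xs0 dxs0 ss0; apply: cvgM.
  by have := continuous_cvg _ (@continuous_expR R (rate * s0)) (cvgMl_tmp (a:=rate) ss0); apply.
have F_cont : continuous F.
  by move=> y; apply: differentiable_continuous; case: (F_grad y).
have gF_cont := lipschitz_continuous gF_lipschitz.
apply: cvgD; [apply: cvgD|].
- by apply: cvgMl_tmp; apply: cvgB; [exact: (continuous_cvg _ (F_cont _) xs0) | exact: cvg_cst].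
- exact: (cvg_ip ip_inner (continuous_cvg _ (gF_cont _) xs0) dxs0).
- apply: cvgMl_tmp; rewrite expr2; under eq_fun do rewrite expr2.
  by apply: cvgM; apply: cvg_norm.
Qed.

Let diffq (f : R -> H) (t h : R) : H := h^-1 *: (f (h + t) - f t).

(* The quotient q_t(h) bounding (phi (t + h) - phi t) / h. *)
Let upper_quotient (t h : R) : R :=
  expR (rate * (h + t)) *
    (a * (h^-1 * (F (x (h + t)) - F (x t))) + ip (gF (x t)) (diffq dx t h)
     + delta / 2 * (ip (diffq dx t h) (dx (h + t)) + ip (dx t) (diffq dx t h))
     + L * `|diffq x t h| * `|dx (h + t)|)
  + V t * (h^-1 * (expR (rate * (h + t)) - expR (rate * t))).

(* Exact expansion of the increment of phi, in which the only term that is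
   not a difference quotient, <gF (x (t+h)) - gF (x t), x'(t+h)>, is bounded
   by Cauchy-Schwarz and the Lipschitz property of gF. *)
Lemma phi_increment_le (t h : R) : 0 < h -> phi (t + h) - phi t <= h * upper_quotient t h.
Proof.
move=> h_gt0; have h_neq0 : h != 0 by rewrite gt_eqF.
set E := expR (rate * (h + t)); set g := gF (x t); set g' := gF (x (h + t)).
have E_gt0 : 0 < E := expR_gt0 _.
have increment : phi (t + h) - phi t = h * upper_quotient t h
    - E * (L * `|x (h + t) - x t| * `|dx (h + t)|) + E * ip (g' - g) (dx (h + t)).
  rewrite /phi /upper_quotient /V /Lyap /diffq (addrC t h) -/E -/g -/g' normrZ.
  have inv_gt0 : 0 < h^-1 by rewrite invr_gt0.
  rewrite (gtr0_norm inv_gt0).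
  rewrite !(ipZr ip_inner) !(ipZl ip_inner) !(ipBr ip_inner) !(ipBl ip_inner).
  rewrite -!(ip_norm ip_inner).
  by field.
have lip_term : ip (g' - g) (dx (h + t)) <= L * `|x (h + t) - x t| * `|dx (h + t)|.
  apply: (le_trans (ip_le_norm ip_inner _ _)).
  by apply: ler_wpM2r => //; apply: gF_lipschitz.
by rewrite increment; move: lip_term; rewrite -(ler_pM2l E_gt0); lra.
Qed.

(* The limit of q_t(h) as h -> 0. *)
Let lyap_slope (t : R) : R :=
  let u := dx t in let g := gF (x t) in let u' := - (alpha *: u) - g in
  expR (rate * t) * (a * ip g u + ip g u' + delta / 2 * (ip u' u + ip u u')
                     + L * `|u| * `|u|)
  + V t * (expR (rate * t) * rate).

(* This limit is exp (rate t) times the dissipation quantity. *)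
Lemma lyap_slope_le0 (t : R) : lyap_slope t <= 0.
Proof.
move: (@lyap_dissipation (x t) (dx t) _ _ erefl erefl).
set D := (X in X <= 0) => D_le0.
have -> : lyap_slope t = expR (rate * t) * D by rewrite /lyap_slope /D /V /Lyap /=; ring.
by rewrite pmulr_rle0 // expR_gt0.
Qed.

Lemma upper_quotient_cvg (t : R) : 0 < t -> upper_quotient t @ 0^' --> lyap_slope t.
Proof.
move=> t_gt0.
have x_quot := derive_quotient_cvg (x_deriv t t_gt0).
have dx_quot := derive_quotient_cvg (dx_deriv t t_gt0).
have F_quot := derive_quotient_cvg (is_derive_gradient_comp F_grad (x_deriv t t_gt0)).
have exp_quot := derive_quotient_cvg (@is_derive_expR_lin R rate t).
have dx_t : {for t, continuous dx}.
  by apply: differentiable_continuous; apply/derivable1_diffP; case: (dx_deriv t t_gt0).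
have dx_cont : (fun h => dx (h + t)) @ 0^' --> dx t := continuous_cvg _ dx_t (shift_cvg t).
have exp_cont : (fun h => expR (rate * (h + t))) @ 0^' --> expR (rate * t).
  by have := continuous_cvg _ (@continuous_expR R (rate * t))
    (cvgMl_tmp (a:=rate) (shift_cvg t)); apply.
rewrite /lyap_slope /=.
apply: cvgD; last by apply: cvgMl_tmp; exact: exp_quot.
apply: cvgM; first exact: exp_cont.
apply: cvgD; [apply: cvgD; [apply: cvgD|]|].
- by apply: cvgMl_tmp; exact: F_quot.
- by apply: (cvg_ip ip_inner); [exact: cvg_cst | exact: dx_quot].
- apply: cvgMl_tmp; apply: cvgD; apply: (cvg_ip ip_inner);
    [exact: dx_quot | exact: dx_cont | exact: cvg_cst | exact: dx_quot].
- by apply: cvgM; [apply: cvgMl_tmp|]; apply: cvg_norm; [exact: x_quot | exact: dx_cont].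
Qed.

Lemma phi_dini (t : R) : 0 < t -> forall e : R, 0 < e ->
  \forall h \near 0^'+, phi (t + h) - phi t <= e * h.
Proof.
move=> t_gt0.
exact: dini_from_quotient (upper_quotient_cvg t t_gt0) (lyap_slope_le0 t) (phi_increment_le t).
Qed.

Hypothesis dx0 : dx 0 = 0.
Hypothesis x_cont0 : x @ 0^'+ --> x 0.
Hypothesis dx_cont0 : dx @ 0^'+ --> dx 0.

(* Decay estimate: phi is nonincreasing and phi 0 = a (F (x 0) - Fstar). *)
Lemma lyap_decay (T : R) : 0 <= T ->
  V T <= a * (F (x 0) - Fstar) * expR (- (rate * T)).
Proof.
move=> T_ge0.
have phi_cont (s : R) : 0 < s -> phi @ s --> phi s.
  move=> s_gt0; apply: phi_cvg; last exact: cvg_id.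
    by apply: differentiable_continuous; apply/derivable1_diffP; case: (x_deriv s s_gt0).
  by apply: differentiable_continuous; apply/derivable1_diffP; case: (dx_deriv s s_gt0).
have phi_cont0 : phi @ 0^'+ --> phi 0.
  by apply: phi_cvg => //; exact: cvg_at_right_filter cvg_id.
have phi0 : phi 0 = a * (F (x 0) - Fstar).
  rewrite /phi /V /Lyap mulr0 expR0 mul1r dx0 (ip0r ip_inner) normr0.
  by rewrite expr2 !mulr0 !addr0.
have := dini_nonincreasing phi_cont phi_cont0 phi_dini _ T_ge0.
rewrite phi0 /phi => decay.
have := ler_wpM2r (ltW (expR_gt0 (- (rate * T)))) decay.
by rewrite mulrAC -expRD addrN expR0 mul1r.
Qed.

End HeavyBallLyapunov.

Theorem lemma6p1 (R : realType) (H : completeNormedModType R)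
  (ip : H -> H -> R) (F : H -> R) (gF : H -> H) (L mu alpha a delta Fstar : R)
  (x0 : H) (x dx : R -> H) :
  is_inner_product ip ->
  is_gradient ip F gF ->
  (forall y z : H, `|gF y - gF z| <= L * `|y - z|) ->
  (exists xs : H, F xs = Fstar) -> (forall y : H, Fstar <= F y) ->
  0 < mu ->
  (forall y : H, F y - Fstar <= 1 / (2 * mu) * `|gF y| ^+ 2) ->
  0 < alpha ->
  (* x is the solution of  x'' + alpha x' + gF x = 0, x(0) = x0, x'(0) = 0 on [0,+oo) *)
  x 0 = x0 -> dx 0 = 0 ->
  x @ at_right 0 --> x 0 -> dx @ at_right 0 --> dx 0 ->
  (forall t : R, 0 < t -> is_derive t 1 x (dx t)) ->
  (forall t : R, 0 < t -> is_derive t 1 dx (- (alpha *: dx t) - gF (x t))) ->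
  0 <= a -> 0 <= delta ->
  0 < alpha - a + delta ->
  a * (alpha - a + delta) <= 2 * mu ->
  L - alpha * delta + delta / 2 * (alpha - a + delta) <= 0 ->
  forall t : R, 0 <= t ->
    Lyap ip F gF Fstar a delta x dx t
      <= a * (F x0 - Fstar) * expR (- ((alpha - a + delta) * t)).
Proof.
move=> ip_inner F_grad gF_lip _ _ mu_gt0 PL _ <- dx0 x_cont0 dx_cont0 x_deriv dx_deriv
  a_ge0 _ rate_gt0 rate_PL rate_L t t_ge0.
exact: (lyap_decay ip_inner F_grad gF_lip PL mu_gt0 a_ge0 rate_gt0 rate_PL rate_L
  x_deriv dx_deriv dx0 x_cont0 dx_cont0 t t_ge0).
Qed.
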